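(* Let $\alpha=a_1a_2\cdots a_n\neq 0^n$ be a bracelet over $\{0,\dots,k-1\}$, and let $i$ be the index of the first nonzero symbol of $\alpha$. If $a_i>1$, then $\mathrm{FirstNonMin}(\alpha)=0^{i-1}(a_i-1)a_{i+1}\cdots a_n$ is a bracelet; moreover, if in addition $\alpha\in\mathbf{A}_k(n)$, then $\mathrm{FirstNonMin}(\alpha)\in\mathbf{A}_k(n)$.
   Context: Let $\Sigma=\{0,1,\dots,k-1\}$, $k\ge 2$. Strings are compared lexicographically ($\alpha<\beta$ if $\alpha$ is a proper prefix of $\beta$, or $\alpha$ has the smaller symbol at the first index where they differ). For $\alpha=a_1\cdots a_n$, $\alpha^R=a_n\cdots a_1$. $[\alpha]$ denotes the set of all rotations of $\alpha$. $\alpha$ is a necklace if it is the lexicographically smallest element of $[\alpha]$; $\alpha$ is a bracelet if it is the lexicographically smallest element of $[\alpha]\cup[\alpha^R]$. A necklace $\alpha$ is symmetric if $\alpha^R\in[\alpha]$ and asymmetric otherwise. $\mathbf{A}_k(n)$ is the set of asymmetric bracelets of length $n$ over $\Sigma$. *)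

From mathcomp Require Import all_boot.
Set Implicit Arguments. Unset Strict Implicit. Unset Printing Implicit Defensive.

(* Strings over Sigma = {0,...,k-1} are represented as sequences of naturals
   whose entries are all < k. Positions are 0-based in Rocq. *)

Fixpoint lexle (a b : seq nat) : bool :=
  match a, b with
  | [::], _ => true
  | _ :: _, [::] => false
  | x :: a', y :: b' => (x < y) || ((x == y) && lexle a' b')
  end.

Definition is_string (k : nat) (a : seq nat) : bool := all (fun x => x < k) a.

Definition rotations (a : seq nat) : seq (seq nat) :=
  [seq rot j a | j <- iota 0 (size a)].

Definition necklace (a : seq nat) : bool :=
  all (fun b => lexle a b) (rotations a).

Definition bracelet (a : seq nat) : bool :=
  all (fun b => lexle a b) (rotations a ++ rotations (rev a)).

Definition symmetric_necklace (a : seq nat) : bool :=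
  necklace a && (rev a \in rotations a).

(* membership in A_k(n): asymmetric bracelets of length n over {0..k-1} *)
Definition asym_bracelet (k n : nat) (a : seq nat) : bool :=
  [&& size a == n, is_string k a, bracelet a & rev a \notin rotations a].

(* 0-based index of the first nonzero symbol *)
Definition first_nonzero (a : seq nat) : nat := find (fun x => x != 0) a.

Definition FirstNonMin (a : seq nat) : seq nat :=
  let i := first_nonzero a in
  nseq i 0 ++ (nth 0 a i).-1 :: drop i.+1 a.

From mathcomp Require Import all_boot.
From mathcomp Require Import zify.

(* Write the string as s = 0^i c t with c > 1 and let s' = 0^i (c-1) t.  Every
   rotation of s or of its reversal carries the distinguished symbol c to some
   position, so it reads u c w, and the same rotation of s' (resp. of its
   reversal) reads u (c-1) w.  Comparing 0^i c t with u c w, the first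
   difference either does not involve the distinguished symbol, or compares the
   leading zeros against c, or compares c against a symbol at least c; in each
   case lowering c by one preserves the comparison, so s' is a bracelet.
   If the reversal of s' were a rotation of s', the two copies of c-1 are
   either at matching places (then the reversal of s is a rotation of s), or
   c-1 lands inside the zero block (impossible since c > 1), or the reversal
   of a rotation of s starts with 0^i (c-1) and is smaller than s. *)

Section MarkedSequences.

Context {T : Type}.

Lemma rot_cat_cons (m : nat) (u w : seq T) :
  exists u' w', forall x, rot m (u ++ x :: w) = u' ++ x :: w'.
Proof.
case: (ltngtP m (size u)) => [lt_m_u|lt_u_m|->].
- exists (drop m u), (w ++ take m u) => x.
  by rewrite /rot drop_cat take_cat lt_m_u -catA.
- have [d md] : exists d, m - size u = d.+1 by exists (m - size u).-1; lia.
  exists (drop d w ++ u), (take d w) => x.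
  by rewrite /rot drop_cat take_cat ltnNge (ltnW lt_u_m) /= md -catA.
- exists [::], (w ++ u) => x.
  by rewrite /rot drop_cat take_cat ltnn subnn drop0 take0 cats0.
Qed.

Lemma rev_cat_cons (u w : seq T) x : rev (u ++ x :: w) = rev w ++ x :: rev u.
Proof. by rewrite rev_cat rev_cons cat_rcons. Qed.

Lemma eq_cat_cons_cases (u1 u2 : seq T) x y w1 w2 :
  u1 ++ x :: w1 = u2 ++ y :: w2 ->
  [\/ [/\ u1 = u2, x = y & w1 = w2],
      exists v, u2 = u1 ++ x :: v /\ w1 = v ++ y :: w2
    | exists v, u1 = u2 ++ y :: v /\ w2 = v ++ x :: w1].
Proof.
elim: u1 u2 => [|z u1 IH] [|z' u2] /=.
- by case=> -> ->; apply: Or31.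
- by case=> -> ->; apply: Or32; exists u2.
- by case=> -> <-; apply: Or33; exists u1.
- case=> -> /IH [[-> -> ->]|[v [-> ->]]|[v [-> ->]]].
  + exact: Or31.
  + by apply: Or32; exists v.
  + by apply: Or33; exists v.
Qed.

End MarkedSequences.

Lemma mem_rotations (s : seq nat) j : 0 < size s -> rot j s \in rotations s.
Proof.
move=> s_gt0; have [lt_j_s|le_s_j] := ltnP j (size s).
  by apply/mapP; exists j; rewrite ?mem_iota.
by rewrite rot_oversize //; apply/mapP; exists 0; rewrite ?mem_iota ?rot0.
Qed.

Lemma lexle_cat_ltF (p s t : seq nat) x y :
  y < x -> lexle (p ++ x :: s) (p ++ y :: t) = false.
Proof.
move=> lt_yx; elim: p => [|z p IH] /=; last by rewrite ltnn eqxx.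
by rewrite ltnNge (ltnW lt_yx) /= eq_sym (ltn_eqF lt_yx).
Qed.

Lemma lexle_zero_prefix_pred i c t u w : 1 < c ->
  lexle (nseq i 0 ++ c :: t) (u ++ c :: w) ->
  lexle (nseq i 0 ++ c.-1 :: t) (u ++ c.-1 :: w).
Proof.
move=> c_gt1; elim: i u => [|i IH] [|y u] /=.
- by rewrite !ltnn !eqxx.
- case/orP => [lt_cy|/andP [/eqP <- _]]; apply/orP; left; lia.
- by move=> _; apply/orP; left; lia.
- by case/orP => [->|/andP [/eqP <- /IH ->]]; rewrite ?orbT.
Qed.

Lemma is_string_pred k (p t : seq nat) c :
  is_string k (p ++ c :: t) -> is_string k (p ++ c.-1 :: t).
Proof.
rewrite /is_string !all_cat /= => /and3P [-> lt_ck ->].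
by rewrite (leq_ltn_trans (leq_pred c) lt_ck).
Qed.

Lemma nseq_first_nonzero (a : seq nat) : a != nseq (size a) 0 ->
  a = nseq (first_nonzero a) 0 ++
      nth 0 a (first_nonzero a) :: drop (first_nonzero a).+1 a.
Proof.
rewrite /first_nonzero; elim: a => [|x a IH] //=.
have [->|_] := eqVneq x 0; last by rewrite drop0.
by rewrite eqseq_cons eqxx /= => /IH {1}->.
Qed.

Section DecreaseFirstNonzero.

Variables (i c : nat) (t : seq nat).
Hypothesis c_gt1 : 1 < c.

Lemma bracelet_zero_prefix_pred :
  bracelet (nseq i 0 ++ c :: t) -> bracelet (nseq i 0 ++ c.-1 :: t).
Proof.
move=> /allP s_min; apply/allP => r; rewrite mem_cat.
case/orP => /mapP [m _ ->].
- have [u [w rotE]] := rot_cat_cons m (nseq i 0) t.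
  rewrite rotE; apply: lexle_zero_prefix_pred => //; rewrite -rotE.
  by apply: s_min; rewrite mem_cat mem_rotations // size_cat addnS.
- rewrite !rev_cat_cons.
  have [u [w rotE]] := rot_cat_cons m (rev t) (rev (nseq i 0)).
  rewrite rotE; apply: lexle_zero_prefix_pred => //; rewrite -rotE.
  apply: s_min; rewrite mem_cat rev_cat_cons mem_rotations ?orbT //.
  by rewrite size_cat addnS.
Qed.

Lemma asym_zero_prefix_pred :
  bracelet (nseq i 0 ++ c :: t) ->
  rev (nseq i 0 ++ c :: t) \notin rotations (nseq i 0 ++ c :: t) ->
  rev (nseq i 0 ++ c.-1 :: t) \notin rotations (nseq i 0 ++ c.-1 :: t).
Proof.
move=> /allP s_min s_asym; apply/negP => /mapP [m m_lt].
rewrite rev_cat_cons rev_nseq.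
have [u [w rotE]] := rot_cat_cons m (nseq i 0) t.
rewrite rotE => /(@eq_cat_cons_cases nat) [[tE _ wE]|[v [_ zerosE]]|[v [_ wE]]].
- move/negP: s_asym; apply; apply/mapP; exists m.
    by move: m_lt; rewrite !mem_iota !size_cat.
  by rewrite rotE rev_cat_cons rev_nseq tE wE.
- have : c.-1 \in nseq i 0 by rewrite zerosE mem_cat mem_head orbT.
  by rewrite mem_nseq => /andP [_ /eqP]; lia.
- have rev_rot_mem :
      rev (rot m (nseq i 0 ++ c :: t)) \in rotations (rev (nseq i 0 ++ c :: t)).
    by rewrite rev_rot /rotr mem_rotations // size_rev size_cat addnS.
  have := s_min (rev (rot m (nseq i 0 ++ c :: t))).
  rewrite mem_cat rev_rot_mem orbT => /(_ isT).
  rewrite rotE wE !rev_cat_cons rev_nseq -catA /=.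
  by rewrite lexle_cat_ltF // ltn_predL ltnW.
Qed.

End DecreaseFirstNonzero.

Theorem mainTheorem3 (k n : nat) (a : seq nat) :
  2 <= k -> size a = n -> is_string k a -> a != nseq n 0 -> bracelet a ->
  1 < nth 0 a (first_nonzero a) ->
  bracelet (FirstNonMin a) /\
  (asym_bracelet k n a -> asym_bracelet k n (FirstNonMin a)).
Proof.
move=> _ <- a_string a_neq0 a_brace.
rewrite /FirstNonMin; have := nseq_first_nonzero a a_neq0.
set i := first_nonzero a; set c := nth 0 a i; set t := drop i.+1 a.
clearbody i c t => aE; subst a => c_gt1.
have brace' : bracelet (nseq i 0 ++ c.-1 :: t).
  exact: bracelet_zero_prefix_pred.
split=> // /and4P [_ _ _ a_asym]; apply/and4P; split=> //.
- by rewrite !size_cat.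
- exact: is_string_pred.
- exact: asym_zero_prefix_pred.
Qed.
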